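(* Let $C\subset\mathbb{R}^l$ be closed and let $g:\mathbb{R}^n\to\mathbb{R}^l$ be continuously differentiable near $\bar x\in g^{-1}(C)$ and twice differentiable at $\bar x$. Assume that every pair $(u,\lambda)\in\mathbb{R}^n\times\mathbb{R}^l$ satisfying $u\ne0$, $\nabla g(\bar x)u\in T_C(g(\bar x))$, $\lambda\in N_C(g(\bar x);\nabla g(\bar x)u)$, $\nabla g(\bar x)^T\lambda=0$, and $\tfrac12\langle\nabla^2\langle\lambda,g\rangle(\bar x)u,u\rangle\ge\underline\chi_C(\lambda,g(\bar x);\nabla g(\bar x)u)$ has $\lambda=0$. Then the mapping $x\mapsto g(x)-C$ is metrically subregular at $(\bar x,0)$.
   Context: Metric subregularity of $x\mapsto g(x)-C$ at $(\bar x,0)$: there are $\kappa\ge0$ and a neighborhood $U$ of $\bar x$ with $\operatorname{dist}(x;g^{-1}(C))\le\kappa\operatorname{dist}(g(x);C)$ for $x\in U$. $\langle\lambda,g\rangle(x)=\langle\lambda,g(x)\rangle$. Lower curvature: $\underline\chi_\Omega(\lambda,\bar z;v):=\lim_{\epsilon\downarrow0}\inf\{\langle\lambda,v'-v\rangle/\tau: 0<\tau<\epsilon,\|v'-v\|<\epsilon,\operatorname{dist}(\lambda;N_\Omega(\bar z+\tau v'))<\epsilon\}$ ($\inf\emptyset=+\infty$, $N_\Omega(z)=\emptyset$ off $\Omega$). $T_C$ contingent cone; $N$ limiting normal cone; $N_C(\bar z;w)=\{v:\exists t_k\downarrow0,w_k\to w,v_k\to v,\ \bar z+t_kw_k\in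 C,\ v_k\in\widehat N_C(\bar z+t_kw_k)\}$ the directional limiting normal cone, $\widehat N$ the regular normal cone. *)

From Stdlib Require Import Reals ClassicalEpsilon.
From mathcomp Require Import ssreflect ssrfun ssrbool eqtype ssrnat fintype bigop.
Set Implicit Arguments.
Unset Strict Implicit.
Local Open Scope R_scope.

Definition vec (n : nat) := 'I_n -> R.
Definition mat (m n : nat) := 'I_m -> 'I_n -> R.

Definition vzero {n} : vec n := fun _ => 0.
Definition vadd {n} (x y : vec n) : vec n := fun i => x i + y i.
Definition vsub {n} (x y : vec n) : vec n := fun i => x i - y i.
Definition vscal {n} (a : R) (x : vec n) : vec n := fun i => a * x i.
Definition dot {n} (x y : vec n) : R := \big[Rplus/0]_(i < n) (x i * y i).
Definition vnorm {n} (x : vec n) : R := sqrt (dot x x).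

Definition mapp {m n} (A : mat m n) (u : vec n) : vec m :=
  fun i => \big[Rplus/0]_(j < n) (A i j * u j).
Definition mtapp {m n} (A : mat m n) (lam : vec m) : vec n :=
  fun j => \big[Rplus/0]_(i < m) (A i j * lam i).

Inductive Rbar := Fin_r (r : R) | p_infty | m_infty.

Definition Rbar_le (x y : Rbar) : Prop :=
  match x, y with
  | m_infty, _ => True
  | _, p_infty => True
  | p_infty, _ => False
  | _, m_infty => False
  | Fin_r a, Fin_r b => a <= b
  end.
Definition Rbar_lt (x y : Rbar) : Prop := Rbar_le x y /\ x <> y.

(* greatest lower bound in [-oo,+oo] of a set of reals (inf of empty = +oo) *)
Definition Rbar_is_inf (E : R -> Prop) (m : Rbar) : Prop :=
  (forall x, E x -> Rbar_le m (Fin_r x)) /\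
  (forall m', (forall x, E x -> Rbar_le m' (Fin_r x)) -> Rbar_le m' m).
Definition Rbar_inf (E : R -> Prop) : Rbar :=
  epsilon (inhabits p_infty) (Rbar_is_inf E).

Definition Rbar_cv_right0 (phi : R -> Rbar) (L : Rbar) : Prop :=
  match L with
  | Fin_r l => forall eta, 0 < eta -> exists d, 0 < d /\
       forall e, 0 < e < d -> exists r, phi e = Fin_r r /\ Rabs (r - l) < eta
  | p_infty => forall M, exists d, 0 < d /\
       forall e, 0 < e < d -> Rbar_lt (Fin_r M) (phi e)
  | m_infty => forall M, exists d, 0 < d /\
       forall e, 0 < e < d -> Rbar_lt (phi e) (Fin_r M)
  end.
Definition Rbar_lim_right0 (phi : R -> Rbar) : Rbar :=
  epsilon (inhabits p_infty) (Rbar_cv_right0 phi).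

Definition dist_set {n} (S : vec n -> Prop) (x : vec n) : Rbar :=
  Rbar_inf (fun r => exists y, S y /\ r = vnorm (vsub x y)).

Definition cv_vec {n} (w : nat -> vec n) (w0 : vec n) : Prop :=
  Un_cv (fun k => vnorm (vsub (w k) w0)) 0.

Definition is_closed {n} (C : vec n -> Prop) : Prop :=
  forall (xk : nat -> vec n) x, (forall k, C (xk k)) -> cv_vec xk x -> C x.

Definition down0 (t : nat -> R) : Prop := (forall k, 0 < t k) /\ Un_cv t 0.

Definition tangent_cone {n} (C : vec n -> Prop) (z w : vec n) : Prop :=
  exists (t : nat -> R) (wk : nat -> vec n),
    down0 t /\ cv_vec wk w /\ forall k, C (vadd z (vscal (t k) (wk k))).

Definition reg_normal {n} (C : vec n -> Prop) (z v : vec n) : Prop :=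
  C z /\ forall eps, 0 < eps -> exists d, 0 < d /\
    forall z', C z' -> vnorm (vsub z' z) < d ->
      dot v (vsub z' z) <= eps * vnorm (vsub z' z).

Definition lim_normal {n} (C : vec n -> Prop) (z v : vec n) : Prop :=
  C z /\ exists (zk vk : nat -> vec n),
    cv_vec zk z /\ cv_vec vk v /\ forall k, reg_normal C (zk k) (vk k).

Definition dir_normal {n} (C : vec n -> Prop) (z w v : vec n) : Prop :=
  exists (t : nat -> R) (wk vk : nat -> vec n),
    down0 t /\ cv_vec wk w /\ cv_vec vk v /\
    forall k, C (vadd z (vscal (t k) (wk k))) /\
              reg_normal C (vadd z (vscal (t k) (wk k))) (vk k).

Definition lower_curv {n} (Om : vec n -> Prop) (lam z v : vec n) : Rbar :=
  Rbar_lim_right0 (fun e =>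
    Rbar_inf (fun r => exists (tau : R) (v' : vec n),
      0 < tau < e /\ vnorm (vsub v' v) < e /\
      Rbar_lt (dist_set (lim_normal Om (vadd z (vscal tau v'))) lam) (Fin_r e) /\
      r = dot lam (vsub v' v) / tau)).

Definition fdiff {n m} (f : vec n -> vec m) (x : vec n) (A : mat m n) : Prop :=
  forall eps, 0 < eps -> exists d, 0 < d /\ forall y, vnorm (vsub y x) < d ->
    vnorm (vsub (vsub (f y) (f x)) (mapp A (vsub y x))) <= eps * vnorm (vsub y x).

Definition cont_at {n m} (f : vec n -> vec m) (x : vec n) : Prop :=
  forall eps, 0 < eps -> exists d, 0 < d /\ forall y, vnorm (vsub y x) < d ->
    vnorm (vsub (f y) (f x)) < eps.

(* Hessian of <lam, g> at xbar, given the second derivatives H i = nabla^2 g_i(xbar) *)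
Definition hess_lag {n l} (H : 'I_l -> mat n n) (lam : vec l) : mat n n :=
  fun j k => \big[Rplus/0]_(i < l) (lam i * H i j k).

(* dist_set(x; g^{-1}(C)) <= kappa * dist_set(g(x); C) on a ball around xbar.
   Both distances are finite whenever C (resp. g^{-1}(C)) is nonempty,
   which is the case in the theorem (g(xbar) in C). *)
Definition real_of (x : Rbar) : R := match x with Fin_r r => r | _ => 0 end.

Definition metric_subregular {n l} (g : vec n -> vec l) (C : vec l -> Prop)
    (xbar : vec n) : Prop :=
  exists kappa d, 0 <= kappa /\ 0 < d /\
    forall x, vnorm (vsub x xbar) < d ->
      Rbar_le (dist_set (fun y => C (g y)) x) (Fin_r (kappa * real_of (dist_set C (g x)))).

(* If subregularity fails, there are points x_k -> xbar with
   dist(x_k, g^-1(C)) > k dist(g x_k, C). Minimizing |g x - c| + mu_k |x - x_k| over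
   c in C and x near x_k (an Ekeland-type penalization) gives points xt_k -> xbar and
   c_k in C such that lam_k = (g xt_k - c_k) / |g xt_k - c_k| is a proximal, hence regular,
   normal to C at c_k, while |nabla g(xt_k)^T lam_k| <= mu_k -> 0 and
   |g xt_k - c_k| = o(|xt_k - xbar|). Along a subsequence the unit vectors
   (xt_k - xbar) / |xt_k - xbar| and lam_k converge to u and lam. Then nabla g(xbar) u is
   tangent to C, lam is a directional normal with nabla g(xbar)^T lam = 0, and a
   second-order expansion of <lam, g> at xt_k, in which the term -<lam, g xt_k - c_k> is
   nonpositive, bounds the lower curvature by (1/2) <nabla^2 <lam, g>(xbar) u, u>.
   The hypothesis forces lam = 0, contradicting |lam| = 1. *)

From HB Require Import structures.
From Stdlib Require Import Reals Lra Psatz Lia Classical ClassicalEpsilon FunctionalExtensionality.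
From mathcomp Require Import ssreflect ssrfun ssrbool eqtype ssrnat seq fintype bigop.
Set Implicit Arguments.
Unset Strict Implicit.
Local Open Scope R_scope.

Lemma Rplus_associative : associative Rplus.
Proof. by move=> x y z; rewrite Rplus_assoc. Qed.
HB.instance Definition _ :=
  Monoid.isComLaw.Build R 0 Rplus Rplus_associative Rplus_comm Rplus_0_l.

Ltac vext := apply: functional_extensionality => ?; rewrite /vadd /vsub /vscal /vzero /=; ring.

Section RealSums.
Variable I : Type.
Implicit Types (r : seq I) (F G : I -> R).

Lemma sumR_add r F G :
  \big[Rplus/0]_(i <- r) (F i + G i) =
  \big[Rplus/0]_(i <- r) F i + \big[Rplus/0]_(i <- r) G i.
Proof. exact: big_split. Qed.

Lemma sumR_mul_l r a F :
  \big[Rplus/0]_(i <- r) (a * F i) = a * \big[Rplus/0]_(i <- r) F i.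
Proof. by elim: r => [|x r IH]; rewrite ?big_nil ?big_cons ?IH /=; ring. Qed.

Lemma sumR_mul_r r a F :
  \big[Rplus/0]_(i <- r) (F i * a) = (\big[Rplus/0]_(i <- r) F i) * a.
Proof. by elim: r => [|x r IH]; rewrite ?big_nil ?big_cons ?IH /=; ring. Qed.

Lemma sumR_sub r F G :
  \big[Rplus/0]_(i <- r) (F i - G i) =
  \big[Rplus/0]_(i <- r) F i - \big[Rplus/0]_(i <- r) G i.
Proof. by elim: r => [|x r IH]; rewrite ?big_nil ?big_cons ?IH /=; ring. Qed.

Lemma sumR_le r F G : (forall i, F i <= G i) ->
  \big[Rplus/0]_(i <- r) F i <= \big[Rplus/0]_(i <- r) G i.
Proof.
by move=> h; elim: r => [|x r IH]; rewrite ?big_nil ?big_cons /=; [lra | apply: Rplus_le_compat].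
Qed.

Lemma sumR_ge0 r F : (forall i, 0 <= F i) -> 0 <= \big[Rplus/0]_(i <- r) F i.
Proof.
by move=> h; elim: r => [|x r IH]; rewrite ?big_nil ?big_cons /=; [lra | move: (h x); lra].
Qed.

Lemma Rabs_sumR_le r F :
  Rabs (\big[Rplus/0]_(i <- r) F i) <= \big[Rplus/0]_(i <- r) Rabs (F i).
Proof.
elim: r => [|x r IH]; rewrite ?big_nil ?big_cons /=; first by rewrite Rabs_R0; lra.
by apply: Rle_trans (Rabs_triang _ _) _; lra.
Qed.

Lemma sumR_sqr_le r F : (forall i, 0 <= F i) ->
  \big[Rplus/0]_(i <- r) (F i * F i) <=
  (\big[Rplus/0]_(i <- r) F i) * (\big[Rplus/0]_(i <- r) F i).
Proof.
move=> h; elim: r => [|x r IH]; rewrite ?big_nil ?big_cons /=; first lra.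
have := sumR_ge0 r h; have := h x; nra.
Qed.

Lemma sumR_cv r (f : nat -> I -> R) (L : I -> R) :
  (forall i, Un_cv (fun k => f k i) (L i)) ->
  Un_cv (fun k => \big[Rplus/0]_(i <- r) f k i) (\big[Rplus/0]_(i <- r) L i).
Proof.
move=> h; elim: r => [|x r IH].
  rewrite big_nil => e he; exists 0%nat => k _.
  by rewrite big_nil /R_dist Rminus_0_r Rabs_R0.
rewrite big_cons; apply: (Un_cv_ext _ _ _ _ (CV_plus _ _ _ _ (h x) IH)) => k.
by rewrite big_cons.
Qed.

End RealSums.

Lemma Rabs_le_inv a b : Rabs a <= b -> - b <= a <= b.
Proof. move=> h; have := Rle_abs a; have := Rle_abs (-a); rewrite Rabs_Ropp; lra. Qed.

Lemma Rdiv_lt_1 a b : 0 < b -> a < b -> a / b < 1.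
Proof.
move=> hb hab; apply: (Rmult_lt_reg_r b) => //.
by rewrite /Rdiv Rmult_assoc Rinv_l; lra.
Qed.

Lemma Rdiv_le_1 a b : 0 < b -> a <= b -> a / b <= 1.
Proof.
move=> hb hab; apply: (Rmult_le_reg_r b) => //.
by rewrite /Rdiv Rmult_assoc Rinv_l; lra.
Qed.

Definition normalize {n} (x : vec n) : vec n := vscal (/ vnorm x) x.

Section Vectors.
Variable n : nat.
Implicit Types x y z : vec n.

Lemma dot_comm x y : dot x y = dot y x.
Proof. by rewrite /dot; apply: eq_bigr => i _; ring. Qed.

Lemma dot_addl x y z : dot (vadd x y) z = dot x z + dot y z.
Proof. by rewrite /dot -sumR_add; apply: eq_bigr => i _; rewrite /vadd; ring. Qed.

Lemma dot_subl x y z : dot (vsub x y) z = dot x z - dot y z.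
Proof. by rewrite /dot -sumR_sub; apply: eq_bigr => i _; rewrite /vsub; ring. Qed.

Lemma dot_scall a x z : dot (vscal a x) z = a * dot x z.
Proof. by rewrite /dot -sumR_mul_l; apply: eq_bigr => i _; rewrite /vscal; ring. Qed.

Lemma dot_addr x y z : dot z (vadd x y) = dot z x + dot z y.
Proof. by rewrite dot_comm dot_addl !(dot_comm z). Qed.

Lemma dot_subr x y z : dot z (vsub x y) = dot z x - dot z y.
Proof. by rewrite dot_comm dot_subl !(dot_comm z). Qed.

Lemma dot_scalr a x z : dot z (vscal a x) = a * dot z x.
Proof. by rewrite dot_comm dot_scall (dot_comm z). Qed.

Lemma dot0l x : dot vzero x = 0.
Proof. by rewrite /dot big1 // => i _; rewrite /vzero; ring. Qed.

Lemma dot_ge0 x : 0 <= dot x x.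
Proof. by apply: sumR_ge0 => i; nra. Qed.

Lemma vnorm_ge0 x : 0 <= vnorm x.
Proof. exact: sqrt_pos. Qed.

Lemma vnorm_sqr x : vnorm x * vnorm x = dot x x.
Proof. by rewrite /vnorm sqrt_sqrt //; apply: dot_ge0. Qed.

Lemma vnorm_eq_sqr x r : 0 <= r -> dot x x = r * r -> vnorm x = r.
Proof. by move=> hr h; rewrite /vnorm h sqrt_square. Qed.

Lemma vnorm_le_sqr x r : 0 <= r -> dot x x <= r * r -> vnorm x <= r.
Proof. by move=> hr h; rewrite /vnorm -(sqrt_square r) //; apply: sqrt_le_1_alt. Qed.

(* The quadratic [t |-> |x - t y|^2] is nonnegative, so its discriminant is nonpositive. *)
Lemma Rabs_dot_le x y : Rabs (dot x y) <= vnorm x * vnorm y.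
Proof.
have hq t : 0 <= dot x x - 2 * t * dot x y + t * t * dot y y.
  have := dot_ge0 (vsub x (vscal t y)).
  by rewrite !dot_subl !dot_subr !dot_scall !dot_scalr (dot_comm y x); lra.
have hx := vnorm_sqr x; have hy := vnorm_sqr y.
have gx := vnorm_ge0 x; have gy := vnorm_ge0 y.
apply: Rsqr_incr_0_var; last nra.
rewrite /Rsqr -Rabs_mult Rabs_pos_eq; last nra.
have [hyy|hyy] := Req_dec (dot y y) 0.
  have [hxy|hxy] := Req_dec (dot x y) 0; first by rewrite hxy; nra.
  have := hq ((dot x x + 1) / (2 * dot x y)).
  have -> : 2 * ((dot x x + 1) / (2 * dot x y)) * dot x y = dot x x + 1 by field.
  by rewrite hyy; lra.
have hpos : 0 < dot y y by have := dot_ge0 y; lra.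
have := hq (dot x y / dot y y).
have -> : dot x x - 2 * (dot x y / dot y y) * dot x y
          + dot x y / dot y y * (dot x y / dot y y) * dot y y
        = (dot x x * dot y y - dot x y * dot x y) / dot y y by field; lra.
move=> /(Rmult_le_compat_l _ _ _ (Rlt_le _ _ hpos)).
have -> : dot y y * ((dot x x * dot y y - dot x y * dot x y) / dot y y)
        = dot x x * dot y y - dot x y * dot x y by field; lra.
nra.
Qed.

Lemma vnorm_triangle x y : vnorm (vadd x y) <= vnorm x + vnorm y.
Proof.
have gx := vnorm_ge0 x; have gy := vnorm_ge0 y.
apply: vnorm_le_sqr; first lra.
rewrite dot_addl !dot_addr (dot_comm y x) -vnorm_sqr -(vnorm_sqr y).
have /Rabs_le_inv := Rabs_dot_le x y; nra.
Qed.

Lemma vnorm_scal a x : vnorm (vscal a x) = Rabs a * vnorm x.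
Proof.
apply: vnorm_eq_sqr; first by have := vnorm_ge0 x; have := Rabs_pos a; nra.
rewrite dot_scall dot_scalr -vnorm_sqr.
have : Rabs a * Rabs a = a * a by rewrite -Rabs_mult Rabs_pos_eq; nra.
nra.
Qed.

Lemma vnorm_subC x y : vnorm (vsub x y) = vnorm (vsub y x).
Proof.
have -> : vsub x y = vscal (-1) (vsub y x) by vext.
by rewrite vnorm_scal Rabs_Ropp Rabs_R1; ring.
Qed.

Lemma vnorm_sub_triangle x y z : vnorm (vsub x z) <= vnorm (vsub x y) + vnorm (vsub y z).
Proof.
have -> : vsub x z = vadd (vsub x y) (vsub y z) by vext.
exact: vnorm_triangle.
Qed.

Lemma vnorm_le_sub_add x y : vnorm x <= vnorm (vsub x y) + vnorm y.
Proof.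
have -> : x = vadd (vsub x y) y by vext.
apply: Rle_trans (vnorm_triangle _ _) _.
have -> : vsub (vadd (vsub x y) y) y = vsub x y by vext.
lra.
Qed.

Lemma vnorm_sub_sqr x y :
  vnorm (vsub x y) * vnorm (vsub x y) = vnorm x * vnorm x - 2 * dot x y + vnorm y * vnorm y.
Proof. by rewrite !vnorm_sqr !dot_subl !dot_subr (dot_comm y x); ring. Qed.

Lemma vnorm0 : vnorm (@vzero n) = 0.
Proof. by apply: vnorm_eq_sqr; [lra | rewrite dot0l; ring]. Qed.

Lemma vnorm_subxx x : vnorm (vsub x x) = 0.
Proof. have -> : vsub x x = vzero by vext.
exact: vnorm0.
Qed.

Lemma vnorm_coord_le x i : Rabs (x i) <= vnorm x.
Proof.
have gx := vnorm_ge0 x.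
apply: Rsqr_incr_0_var => //; rewrite /Rsqr vnorm_sqr -Rabs_mult Rabs_pos_eq; last nra.
rewrite /dot (bigD1 i) //=.
have : 0 <= \big[Rplus/0]_(j < n | j != i) (x j * x j).
  by apply: big_ind => //; [lra | move=> a b; lra | move=> j _; nra].
by move: (\big[Rplus/0]_(j < n | j != i) _) => s; lra.
Qed.

Lemma vnorm_le_sum_abs x : vnorm x <= \big[Rplus/0]_(i < n) Rabs (x i).
Proof.
apply: vnorm_le_sqr; first by apply: sumR_ge0 => i; apply: Rabs_pos.
apply: Rle_trans (sumR_sqr_le _ (fun i => Rabs_pos (x i))).
by apply: sumR_le => i; rewrite -Rabs_mult Rabs_pos_eq; nra.
Qed.

Lemma vnorm_sub_eq0 x y : vnorm (vsub x y) = 0 -> x = y.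
Proof.
move=> h; apply: functional_extensionality => i.
have := vnorm_coord_le (vsub x y) i; rewrite h /vsub => hi.
have := Rabs_pos (x i - y i).
have [e|ne] := Req_dec (x i - y i) 0; first lra.
by have := Rabs_pos_lt _ ne; lra.
Qed.

Lemma vnorm_neq0 x : vnorm x = 1 -> x <> vzero.
Proof. by move=> h e; rewrite e vnorm0 in h; lra. Qed.

Lemma vnorm_normalize x : 0 < vnorm x -> vnorm (normalize x) = 1.
Proof.
move=> h; rewrite /normalize vnorm_scal Rabs_pos_eq; last by left; apply: Rinv_0_lt_compat.
by field; lra.
Qed.

Lemma normalizeK x : 0 < vnorm x -> vscal (vnorm x) (normalize x) = x.
Proof.
move=> h; apply: functional_extensionality => i; rewrite /normalize /vscal.
by field; lra.
Qed.

End Vectors.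

Definition mnorm {m n} (A : mat m n) : R :=
  \big[Rplus/0]_(i < m) \big[Rplus/0]_(j < n) Rabs (A i j).

Definition quad_form {n} (M : mat n n) (x : vec n) : R := dot (mapp M x) x.

Section Matrices.
Variables m n : nat.
Implicit Types (A : mat m n) (u v : vec n) (lam : vec m).

Lemma mapp_sub A u v : mapp A (vsub u v) = vsub (mapp A u) (mapp A v).
Proof. by apply: functional_extensionality => i; rewrite /vsub /mapp -/(dot _ _) dot_subr. Qed.

Lemma mapp_scal A a u : mapp A (vscal a u) = vscal a (mapp A u).
Proof. by apply: functional_extensionality => i; rewrite /vscal /mapp -/(dot _ _) dot_scalr. Qed.

Lemma mnorm_ge0 A : 0 <= mnorm A.
Proof. by apply: sumR_ge0 => i; apply: sumR_ge0 => j; apply: Rabs_pos. Qed.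

Lemma vnorm_mapp_le A u : vnorm (mapp A u) <= mnorm A * vnorm u.
Proof.
apply: Rle_trans (vnorm_le_sum_abs _) _.
rewrite /mnorm -sumR_mul_r; apply: sumR_le => i.
rewrite -sumR_mul_r; apply: Rle_trans (Rabs_sumR_le _ _) _; apply: sumR_le => j.
by rewrite Rabs_mult; apply: Rmult_le_compat_l; [apply: Rabs_pos | apply: vnorm_coord_le].
Qed.

Lemma dot_mapp A lam u : dot lam (mapp A u) = dot (mtapp A lam) u.
Proof.
rewrite /dot /mapp /mtapp.
under eq_bigr => i _ do rewrite -sumR_mul_l.
rewrite exchange_big; apply: eq_bigr => j _.
by rewrite -sumR_mul_r; apply: eq_bigr => i _; ring.
Qed.

End Matrices.

Lemma quad_form_scal {n} (M : mat n n) a x : quad_form M (vscal a x) = a * a * quad_form M x.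
Proof. by rewrite /quad_form mapp_scal dot_scall dot_scalr; ring. Qed.

Lemma quad_form_sub_le {n} (M : mat n n) x y :
  Rabs (quad_form M x - quad_form M y) <= mnorm M * (vnorm x + vnorm y) * vnorm (vsub x y).
Proof.
have -> : quad_form M x - quad_form M y = dot (mapp M x) (vsub x y) + dot (mapp M (vsub x y)) y.
  by rewrite /quad_form mapp_sub !dot_subr !dot_subl; ring.
apply: Rle_trans (Rabs_triang _ _) _.
have h1 := Rabs_dot_le (mapp M x) (vsub x y).
have h2 := Rabs_dot_le (mapp M (vsub x y)) y.
have h3 := vnorm_mapp_le M x; have h4 := vnorm_mapp_le M (vsub x y).
have g1 := vnorm_ge0 (vsub x y); have g2 := vnorm_ge0 y; have g3 := vnorm_ge0 x.
have g4 := mnorm_ge0 M.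
have : vnorm (mapp M x) * vnorm (vsub x y) <= mnorm M * vnorm x * vnorm (vsub x y) by nra.
have : vnorm (mapp M (vsub x y)) * vnorm y <= mnorm M * vnorm (vsub x y) * vnorm y by nra.
nra.
Qed.

Lemma quad_form_hess_lag {n l} (H : 'I_l -> mat n n) (lam : vec l) (h : vec n) :
  quad_form (hess_lag H lam) h = \big[Rplus/0]_(i < l) (lam i * quad_form (H i) h).
Proof.
rewrite /quad_form /dot /mapp /hess_lag.
under eq_bigr => k _ do under eq_bigr => j _ do rewrite -sumR_mul_r.
under eq_bigr => k _ do rewrite exchange_big -sumR_mul_r.
rewrite exchange_big; apply: eq_bigr => i _.
rewrite -sumR_mul_l; apply: eq_bigr => k _.
by rewrite -!sumR_mul_r -sumR_mul_l; apply: eq_bigr => j _; ring.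
Qed.

Definition eventually (P : nat -> Prop) := exists N, forall k, (k >= N)%coq_nat -> P k.

Lemma eventually_and (P Q : nat -> Prop) :
  eventually P -> eventually Q -> eventually (fun k => P k /\ Q k).
Proof.
by move=> [N1 h1] [N2 h2]; exists (N1 + N2)%coq_nat => k hk; split; [apply: h1 | apply: h2]; lia.
Qed.

Lemma eventually_witness (P : nat -> Prop) : eventually P -> exists k, P k.
Proof. by move=> [N h]; exists N; apply: h. Qed.

Lemma Un_cv_eventually u L eps : Un_cv u L -> 0 < eps -> eventually (fun k => Rabs (u k - L) < eps).
Proof. by move=> h /h. Qed.

Lemma Un_cv_const a : Un_cv (fun _ => a) a.
Proof. by move=> e he; exists O => k _; rewrite /R_dist Rminus_diag Rabs_R0. Qed.

Section Sequences.
Variable n : nat.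
Implicit Types (w : nat -> vec n) (v : vec n).

Lemma cv_vecP w v : cv_vec w v <->
  forall eps, 0 < eps -> exists N, forall k, (k >= N)%coq_nat -> vnorm (vsub (w k) v) < eps.
Proof.
split=> h eps he; have [N hN] := h eps he; exists N => k hk; have := hN k hk;
by rewrite /R_dist Rminus_0_r Rabs_pos_eq //; apply: vnorm_ge0.
Qed.

Lemma cv_vec_const v : cv_vec (fun _ => v) v.
Proof. by move=> e he; exists O => k _; rewrite /R_dist vnorm_subxx Rminus_0_r Rabs_R0. Qed.

Lemma cv_vec_eventually w v eps : cv_vec w v -> 0 < eps ->
  eventually (fun k => vnorm (vsub (w k) v) < eps).
Proof. by move/cv_vecP; apply. Qed.

Lemma cv_vec_coord w v i : cv_vec w v -> Un_cv (fun k => w k i) (v i).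
Proof.
move/cv_vecP=> h eps he; have [N hN] := h eps he; exists N => k hk.
exact: Rle_lt_trans (vnorm_coord_le (vsub (w k) v) i) (hN k hk).
Qed.

Lemma coord_cv_vec w v : (forall i, Un_cv (fun k => w k i) (v i)) -> cv_vec w v.
Proof.
move=> h.
have hs : Un_cv (fun k => \big[Rplus/0]_(i < n) Rabs (w k i - v i)) (\big[Rplus/0]_(i < n) 0).
  apply: sumR_cv => i eps he; have [N hN] := h i eps he; exists N => k hk.
  by have := hN k hk; rewrite /R_dist Rminus_0_r Rabs_Rabsolu.
rewrite big1 // in hs.
apply/cv_vecP => eps he; have [N hN] := hs eps he; exists N => k hk.
have := hN k hk; rewrite /R_dist Rminus_0_r.
have := vnorm_le_sum_abs (vsub (w k) v); rewrite /vsub.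
have : 0 <= \big[Rplus/0]_(i < n) Rabs (w k i - v i) by apply: sumR_ge0 => i; apply: Rabs_pos.
move: (\big[Rplus/0]_(i < n) _) => s hs0 hle; rewrite Rabs_pos_eq //; lra.
Qed.

Lemma cv_vec_unit w v : cv_vec w v -> (forall k, vnorm (w k) = 1) -> vnorm v = 1.
Proof.
move=> hc h1; apply: NNPP => hne.
have [N hN] := cv_vec_eventually hc (Rabs_pos_lt _ (Rminus_eq_contra _ _ hne)).
have := hN N (le_n N); have := h1 N.
have := vnorm_le_sub_add (w N) v; have := vnorm_le_sub_add v (w N).
rewrite (vnorm_subC v (w N)).
by case: (Rcase_abs (vnorm v - 1)) => hs; [rewrite Rabs_left | rewrite Rabs_right]; lra.
Qed.

End Sequences.

Definition strictly_increasing (phi : nat -> nat) := forall j, (phi j < phi (S j))%coq_nat.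

Lemma strictly_increasing_ge phi : strictly_increasing phi -> forall j, (j <= phi j)%coq_nat.
Proof. by move=> h; elim=> [|j IH]; [lia | have := h j; lia]. Qed.

Lemma strictly_increasing_comp phi psi :
  strictly_increasing phi -> strictly_increasing psi -> strictly_increasing (fun j => phi (psi j)).
Proof.
move=> hp hq j.
have mono a b : (a < b)%coq_nat -> (phi a < phi b)%coq_nat.
  elim: b => [|b IH] hab; first lia.
  have [->|hne] := Nat.eq_dec a b; first exact: hp.
  by have := IH ltac:(lia); have := hp b; lia.
exact/mono/hq.
Qed.

Lemma Un_cv_subseq u L phi : strictly_increasing phi -> Un_cv u L -> Un_cv (fun j => u (phi j)) L.
Proof.
move=> hp h eps he; have [N hN] := h eps he; exists N => j hj; apply: hN.
by have := strictly_increasing_ge hp j; lia.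
Qed.

Lemma cv_vec_subseq {n} (w : nat -> vec n) w0 phi :
  strictly_increasing phi -> cv_vec w w0 -> cv_vec (fun j => w (phi j)) w0.
Proof. exact: Un_cv_subseq. Qed.

Lemma INR_succ_pos j : 0 < INR j + 1.
Proof. by have := pos_INR j; lra. Qed.

Lemma inv_INR_succ_le_1 j : / (INR j + 1) <= 1.
Proof.
rewrite -Rinv_1; apply: Rinv_le_contravar; first lra.
by have := pos_INR j; lra.
Qed.

Lemma inv_INR_succ_le j k : (j <= k)%coq_nat -> / (INR k + 1) <= / (INR j + 1).
Proof.
move=> h; apply: Rinv_le_contravar; first by have := pos_INR j; lra.
by have := le_INR _ _ h; lra.
Qed.

Lemma inv_INR_succ_eventually_lt eps : 0 < eps ->
  exists N : nat, forall j, (j >= N)%coq_nat -> / (INR j + 1) < eps.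
Proof.
move=> he; have [hk1 hk2] := archimed (/ eps).
exists (Z.to_nat (up (/ eps))) => j hj.
have : IZR (up (/ eps)) <= INR (Z.to_nat (up (/ eps))) by rewrite INR_IZR_INZ; apply: IZR_le; lia.
have := le_INR _ _ hj; have := pos_INR j => *.
rewrite -(Rinv_inv eps); apply: Rinv_lt_contravar; last lra.
by apply: Rmult_lt_0_compat; [exact: Rinv_0_lt_compat | lra].
Qed.

Lemma Un_cv_le_inv_INR (a : nat -> R) c :
  (forall j, 0 <= a j <= c / (INR j + 1)) -> Un_cv a 0.
Proof.
move=> h e he.
have hc : 0 <= c by have [h1 h2] := h O; move: h2; rewrite /= Rplus_0_l Rdiv_1_r; lra.
have [N hN] := @inv_INR_succ_eventually_lt (e / (c + 1)) ltac:(apply: Rdiv_lt_0_compat; lra).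
exists N => j hj; rewrite /R_dist Rminus_0_r.
have [h1 h2] := h j; rewrite Rabs_pos_eq //.
apply: Rle_lt_trans h2 _.
have : c / (INR j + 1) <= c * (e / (c + 1)).
  by rewrite /Rdiv; apply: Rmult_le_compat_l => //; have := hN j hj; lra.
have : c * (e / (c + 1)) < e.
  have -> : c * (e / (c + 1)) = e - e / (c + 1) by field; lra.
  suff : 0 < e / (c + 1) by lra.
  by apply: Rdiv_lt_0_compat; lra.
lra.
Qed.

Lemma choice_nat {A} (P : nat -> A -> Prop) :
  (forall j, exists a, P j a) -> exists f, forall j, P j (f j).
Proof.
move=> h; exists (fun j => proj1_sig (constructive_indefinite_description _ (h j))).
by move=> j; case: constructive_indefinite_description.
Qed.

Lemma Bolzano_Weierstrass_R (u : nat -> R) M : (forall k, Rabs (u k) <= M) ->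
  exists phi L, strictly_increasing phi /\ Un_cv (fun j => u (phi j)) L.
Proof.
move=> hb.
have [L hL] : exists L, ValAdh u L.
  apply: (Bolzano_Weierstrass u (fun c => - M <= c <= M)); first exact: compact_P3.
  by move=> k; apply: Rabs_le_inv.
have hf N j : exists p, (N <= p)%coq_nat /\ Rabs (u p - L) < / (INR j + 1).
  have hpos : 0 < / (INR j + 1) by apply: Rinv_0_lt_compat; have := pos_INR j; lra.
  have [|p [hp1 hp2]] := hL (disc L (mkposreal _ hpos)) N; last by exists p.
  by exists (mkposreal _ hpos).
have [f hfN] : exists f : nat -> nat -> nat, forall N j,
    (N <= f N j)%coq_nat /\ Rabs (u (f N j) - L) < / (INR j + 1).
  have [F hF] := choice_nat (fun N => choice_nat (hf N)).
  by exists F.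
pose phi := fix phi j := match j with O => f O O | S j' => f (S (phi j')) (S j') end.
exists phi, L; split.
  by move=> j /=; have := (hfN (S (phi j)) (S j)).1; lia.
move=> eps he; have [N hN] := inv_INR_succ_eventually_lt he.
exists N => j hj; rewrite /R_dist.
apply: Rlt_trans (hN j hj); case: j hj => [|j] hj /=; first exact: (hfN O O).2.
exact: (hfN (S (phi j)) (S j)).2.
Qed.

Lemma Bolzano_Weierstrass_vec {n} (w : nat -> vec n) M : (forall k, vnorm (w k) <= M) ->
  exists phi w0, strictly_increasing phi /\ cv_vec (fun j => w (phi j)) w0.
Proof.
move=> hb.
have key (s : seq 'I_n) : exists phi (w0 : vec n), strictly_increasing phi /\
    forall i, i \in s -> Un_cv (fun j => w (phi j) i) (w0 i).
  elim: s => [|i s [phi [w0 [hp IH]]]].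
    by exists id, vzero; split => // j /=; lia.
  have [psi [L [hq hL]]] := @Bolzano_Weierstrass_R (fun j => w (phi j) i) M
    (fun k => Rle_trans _ _ _ (vnorm_coord_le _ i) (hb (phi k))).
  exists (fun j => phi (psi j)), (fun k => if k == i then L else w0 k); split.
    exact: strictly_increasing_comp.
  move=> k; rewrite in_cons; case: eqP => [-> _|hne] /=; first exact: hL.
  by move=> hk; apply: (Un_cv_subseq (u := fun j => w (phi j) k)) => //; apply: IH.
have [phi [w0 [hp hc]]] := key (index_enum 'I_n).
exists phi, w0; split => //; apply: coord_cv_vec => i; apply: hc; exact: mem_index_enum.
Qed.

Lemma Bolzano_Weierstrass_vec_eventually {n} (w : nat -> vec n) M N :
  (forall k, (k >= N)%coq_nat -> vnorm (w k) <= M) ->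
  exists phi w0, strictly_increasing phi /\ cv_vec (fun j => w (phi j)) w0.
Proof.
move=> hb.
have [phi [w0 [hp hc]]] := @Bolzano_Weierstrass_vec _ (fun k => w (k + N)%coq_nat) M
  (fun k => hb (k + N)%coq_nat (Nat.le_add_l N k)).
by exists (fun j => (phi j + N)%coq_nat), w0; split => // j; have := hp j; lia.
Qed.

Lemma Rbar_le_trans a b c : Rbar_le a b -> Rbar_le b c -> Rbar_le a c.
Proof. by case: a; case: b; case: c => //= *; lra. Qed.

Lemma Rbar_is_inf_ex (E : R -> Prop) : exists m, Rbar_is_inf E m.
Proof.
have [[x0 hx0]|hemp] := classic (exists x, E x); last first.
  exists p_infty; split; last by case.
  by move=> x hx; exfalso; apply: hemp; exists x.
have [[b hb]|hnb] := classic (exists b, forall x, E x -> b <= x); last first.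
  exists m_infty; split => // -[a| |] //= hm'; last by have := hm' x0 hx0.
  by exfalso; apply: hnb; exists a => x hx; apply: hm'.
have hbd : bound (fun y => E (- y)) by exists (- b) => y hy; have := hb _ hy; lra.
have hne : exists y, E (- y) by exists (- x0); rewrite Ropp_involutive.
have [s [hs1 hs2]] := completeness _ hbd hne.
exists (Fin_r (- s)); split.
  by move=> x hx /=; have := hs1 (- x); rewrite Ropp_involutive => /(_ hx); lra.
case=> //= [a|] hm'; last by have := hm' x0 hx0.
suff : s <= - a by lra.
by apply: hs2 => y hy; have := hm' _ hy; lra.
Qed.

Lemma Rbar_inf_spec E : Rbar_is_inf E (Rbar_inf E).
Proof. exact: epsilon_spec (Rbar_is_inf_ex E). Qed.

Lemma Rbar_inf_le E x : E x -> Rbar_le (Rbar_inf E) (Fin_r x).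
Proof. by case: (Rbar_inf_spec E) => h _; apply: h. Qed.

Lemma Rbar_inf_ge E m : (forall x, E x -> Rbar_le m (Fin_r x)) -> Rbar_le m (Rbar_inf E).
Proof. by case: (Rbar_inf_spec E) => _ h; apply: h. Qed.

Lemma Rbar_inf_mono (E1 E2 : R -> Prop) :
  (forall x, E1 x -> E2 x) -> Rbar_le (Rbar_inf E2) (Rbar_inf E1).
Proof. by move=> h; apply: Rbar_inf_ge => x hx; apply/Rbar_inf_le/h. Qed.

Lemma Rbar_inf_finite (E : R -> Prop) b x0 : E x0 -> (forall x, E x -> b <= x) ->
  exists r, Rbar_inf E = Fin_r r /\ b <= r /\ (forall x, E x -> r <= x) /\
    (forall eta, 0 < eta -> exists x, E x /\ x < r + eta).
Proof.
move=> h0 hb.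
have := Rbar_inf_le h0.
have : Rbar_le (Fin_r b) (Rbar_inf E) by apply: Rbar_inf_ge.
case heq: (Rbar_inf E) => [r| |] //= h2 h1.
exists r; split => //; split => //; split.
  by move=> x /Rbar_inf_le; rewrite heq.
move=> eta he; apply: NNPP => hno.
have : Rbar_le (Fin_r (r + eta)) (Rbar_inf E).
  by apply: Rbar_inf_ge => x hx /=; apply: Rnot_lt_le => hlt; apply: hno; exists x.
by rewrite heq /=; lra.
Qed.

Lemma dist_set_finite {n} (S : vec n -> Prop) x a : S a ->
  exists r, dist_set S x = Fin_r r /\ 0 <= r /\ (forall y, S y -> r <= vnorm (vsub x y)) /\
    (forall eta, 0 < eta -> exists y, S y /\ vnorm (vsub x y) < r + eta).
Proof.
move=> ha.
case: (@Rbar_inf_finite (fun r => exists y, S y /\ r = vnorm (vsub x y)) 0 (vnorm (vsub x a))).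
- by exists a.
- by move=> r [y [_ ->]]; apply: vnorm_ge0.
move=> r [h1 [h2 [h3 h4]]].
exists r; split => //; split => //; split.
  by move=> y hy; apply: h3; exists y.
by move=> eta he; have [_ [[y [hy ->]] hz]] := h4 eta he; exists y.
Qed.

Lemma dist_set_lt {n} (S : vec n -> Prop) x y e :
  S y -> vnorm (vsub x y) < e -> Rbar_lt (dist_set S x) (Fin_r e).
Proof.
move=> hy hlt; have [r [hr [_ [hle _]]]] := dist_set_finite x hy.
have := hle y hy; rewrite hr => h.
by split; [rewrite /=; lra | move=> [e']; lra].
Qed.

Lemma Rbar_lt_Fin_le d e1 e2 : e1 <= e2 -> Rbar_lt d (Fin_r e1) -> Rbar_lt d (Fin_r e2).
Proof.
move=> hle [h1 h2]; split; first exact: Rbar_le_trans h1 _.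
by case: d h1 h2 => //= r h1 h2 [e]; subst; apply: h2; f_equal; lra.
Qed.

Section LimitRight0.
Variable phi : R -> Rbar.
Hypothesis phi_nonincr : forall e1 e2, 0 < e1 -> e1 <= e2 -> Rbar_le (phi e2) (phi e1).

(* The limit is the supremum of the values of [phi] on [(0, e0]], for any [e0] with
   [phi e0 <> -oo]; if there is no such [e0], it is [-oo]. *)
Lemma Rbar_cv_right0_bounded B :
  (forall e, 0 < e -> Rbar_le (phi e) (Fin_r B)) -> exists L, Rbar_cv_right0 phi L.
Proof.
move=> hB.
have [[e0 [he0 hne]]|hall] := classic (exists e0, 0 < e0 /\ phi e0 <> m_infty); last first.
  exists m_infty => M; exists 1; split; first lra.
  move=> e he; suff -> : phi e = m_infty by [].
  by apply: NNPP => hh; apply: hall; exists e; split => //; lra.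
have hfin e : 0 < e -> e <= e0 -> exists r, phi e = Fin_r r.
  move=> he hle; have := phi_nonincr he hle; have := hB _ he.
  by case: (phi e) => [r| |] //= _; [exists r | case: (phi e0) hne].
pose T y := exists e, 0 < e <= e0 /\ phi e = Fin_r y.
have hTb : bound T by exists B => y [e [[he1 _] hy]]; have := hB _ he1; rewrite hy.
have hTne : exists y, T y.
  by have [r hr] := hfin e0 he0 (Rle_refl _); exists r, e0; split => //; lra.
have [s [hs1 hs2]] := completeness _ hTb hTne.
exists (Fin_r s) => eta heta.
have [y [[e1 [[he1 he1'] hy]] hys]] : exists y, T y /\ s - eta < y.
  apply: NNPP => hno; suff : s <= s - eta by lra.
  by apply: hs2 => y hy; apply: Rnot_lt_le => hlt; apply: hno; exists y.
exists e1; split => // e [he he'].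
have [r hr] := hfin e he ltac:(lra); exists r; split => //.
have : r <= s by apply: hs1; exists e; split => //; lra.
have := phi_nonincr he (Rlt_le _ _ he'); rewrite hy hr /= => h2 h1.
by apply: Rabs_def1; lra.
Qed.

Lemma Rbar_lim_right0_le B :
  (forall e, 0 < e -> Rbar_le (phi e) (Fin_r B)) -> Rbar_le (Rbar_lim_right0 phi) (Fin_r B).
Proof.
move=> hB; rewrite /Rbar_lim_right0.
have := epsilon_spec (inhabits p_infty) _ (Rbar_cv_right0_bounded hB).
case: (epsilon _ _) => [l| |] //= hcv.
  apply: Rnot_lt_le => hlt.
  have [d [hd hdd]] := hcv (l - B) ltac:(lra).
  have [r [hr /Rabs_def2 hrl]] := hdd (d / 2) ltac:(lra).
  by have := hB (d / 2) ltac:(lra); rewrite hr /=; lra.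
have [d [hd hdd]] := hcv B.
have [h1 h2] := hdd (d / 2) ltac:(lra).
have := hB (d / 2) ltac:(lra); move: h1 h2.
by case: (phi (d / 2)) => [r| |] //= h1 h2 h3; apply: h2; f_equal; lra.
Qed.

End LimitRight0.

Lemma lower_curv_le {n} (Om : vec n -> Prop) lam z v B :
  (forall e eta, 0 < e -> 0 < eta -> exists tau v', 0 < tau < e /\ vnorm (vsub v' v) < e /\
     Rbar_lt (dist_set (lim_normal Om (vadd z (vscal tau v'))) lam) (Fin_r e) /\
     dot lam (vsub v' v) / tau <= B + eta) ->
  Rbar_le (lower_curv Om lam z v) (Fin_r B).
Proof.
move=> h; apply: Rbar_lim_right0_le.
  move=> e1 e2 he1 hle; apply: Rbar_inf_mono => x [tau [v' [ht [hv [hd hx]]]]].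
  exists tau, v'; split; first lra; split; first lra.
  by split; [exact: Rbar_lt_Fin_le hd | exact: hx].
move=> e he.
set E := fun r => _.
have hall eta : 0 < eta -> Rbar_le (Rbar_inf E) (Fin_r (B + eta)).
  move=> heta; have [tau [v' [h1 [h2 [h3 h4]]]]] := h e eta he heta.
  apply: Rbar_le_trans (Rbar_inf_le _) _; last exact: h4.
  by exists tau, v'.
move: hall; case: (Rbar_inf E) => [r| |] //= hall; last by have := hall 1 ltac:(lra).
by apply: Rnot_lt_le => hlt; have := hall ((r - B) / 2) ltac:(lra); lra.
Qed.

Lemma reg_normal_lim_normal {l} (C : vec l -> Prop) z v : reg_normal C z v -> lim_normal C z v.
Proof.
move=> h; split; first by case: h.
exists (fun _ => z), (fun _ => v).
by split; [|split]; [exact: cv_vec_const | exact: cv_vec_const |].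
Qed.

Lemma derivable_pt_lim_dot_line {n l} (f : vec n -> vec l) (A : mat l n) lam y0 h s0 :
  fdiff f (vadd y0 (vscal s0 h)) A ->
  derivable_pt_lim (fun s => dot lam (f (vadd y0 (vscal s h)))) s0 (dot lam (mapp A h)).
Proof.
move=> hf eps he.
set y := vadd y0 (vscal s0 h).
have gl := vnorm_ge0 lam; have gh := vnorm_ge0 h.
set eta := eps / (2 * (vnorm lam * vnorm h + 1)).
have heta : 0 < eta by apply: Rdiv_lt_0_compat => //; nra.
have [d [hd hfd]] := hf eta heta.
have hdel : 0 < d / (vnorm h + 1) by apply: Rdiv_lt_0_compat; lra.
exists (mkposreal _ hdel) => hh hne /= hlt.
have -> : vadd y0 (vscal (s0 + hh) h) = vadd y (vscal hh h) by rewrite /y; vext.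
have hb := hfd (vadd y (vscal hh h)).
have hyy : vsub (vadd y (vscal hh h)) y = vscal hh h by vext.
rewrite hyy vnorm_scal in hb.
have hah : Rabs hh > 0 by apply: Rabs_pos_lt.
have {}hb : vnorm (vsub (vsub (f (vadd y (vscal hh h))) (f y)) (mapp A (vscal hh h)))
    <= eta * (Rabs hh * vnorm h).
  apply: hb; suff : Rabs hh * (vnorm h + 1) < d by nra.
  have := Rmult_lt_compat_r (vnorm h + 1) _ _ ltac:(lra) hlt.
  by rewrite /Rdiv Rmult_assoc Rinv_l; [rewrite Rmult_1_r | lra].
have -> : (dot lam (f (vadd y (vscal hh h))) - dot lam (f y)) / hh - dot lam (mapp A h)
    = dot lam (vsub (vsub (f (vadd y (vscal hh h))) (f y)) (mapp A (vscal hh h))) / hh.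
  by rewrite mapp_scal !dot_subr dot_scalr; field; lra.
rewrite /Rdiv Rabs_mult Rabs_inv.
apply: (Rle_lt_trans _ (vnorm lam * (eta * (Rabs hh * vnorm h)) / Rabs hh)).
  apply: Rmult_le_compat_r; first by left; apply: Rinv_0_lt_compat.
  by apply: Rle_trans (Rabs_dot_le _ _) _; apply: Rmult_le_compat_l.
have -> : vnorm lam * (eta * (Rabs hh * vnorm h)) / Rabs hh
    = eps * (vnorm lam * vnorm h / (2 * (vnorm lam * vnorm h + 1))).
  by rewrite /eta; field; nra.
suff : vnorm lam * vnorm h / (2 * (vnorm lam * vnorm h + 1)) < 1 by nra.
by apply: Rdiv_lt_1; nra.
Qed.

Lemma derivable_pt_lim_quadratic a b s0 :
  derivable_pt_lim (fun s => a * s + b * (s * s)) s0 (a + 2 * b * s0).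
Proof.
move=> eps he.
have hd : 0 < eps / (Rabs b + 1) by apply: Rdiv_lt_0_compat => //; have := Rabs_pos b; lra.
exists (mkposreal _ hd) => hh hne /= hlt.
have -> : (a * (s0 + hh) + b * ((s0 + hh) * (s0 + hh)) - (a * s0 + b * (s0 * s0))) / hh
          - (a + 2 * b * s0) = b * hh by field.
rewrite Rabs_mult; have hb := Rabs_pos b.
have : Rabs hh * (Rabs b + 1) < eps.
  have := Rmult_lt_compat_r (Rabs b + 1) _ _ ltac:(lra) hlt.
  by rewrite /Rdiv Rmult_assoc Rinv_l; [rewrite Rmult_1_r | lra].
by have := Rabs_pos hh; nra.
Qed.

Lemma finite_uniform_delta {l} (P : 'I_l -> R -> Prop) :
  (forall i d d', P i d -> 0 < d' <= d -> P i d') ->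
  (forall i, exists d, 0 < d /\ P i d) -> exists d, 0 < d /\ forall i, P i d.
Proof.
move=> hmono hall.
have key (s : seq 'I_l) : exists d, 0 < d /\ forall i, i \in s -> P i d.
  elim: s => [|i s [d [hd IH]]]; first by exists 1; split => //; lra.
  have [d' [hd' hi]] := hall i.
  exists (Rmin d d'); split; first exact: Rmin_pos.
  move=> k; rewrite in_cons => /orP[/eqP ->|hk].
    by apply: hmono hi _; split; [apply: Rmin_pos | apply: Rmin_r].
  by apply: hmono (IH k hk) _; split; [apply: Rmin_pos | apply: Rmin_l].
have [d [hd h]] := key (index_enum 'I_l).
by exists d; split => // i; apply: h; rewrite mem_index_enum.
Qed.

Section SecondOrder.
Variables (n l : nat) (g : vec n -> vec l) (J : vec n -> mat l n) (H : 'I_l -> mat n n).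
Variables (xbar : vec n) (delta : R).
Hypothesis g_diff : forall y, vnorm (vsub y xbar) < delta -> fdiff g y (J y).
Hypothesis J_diff : forall i, fdiff (fun z => J z i) xbar (H i).

(* Mean value theorem for [s |-> <lam, g (xbar + s h)> - (a s + b s^2)] on [0, 1]. *)
Lemma second_order_mvt lam y : vnorm (vsub y xbar) < delta ->
  exists c, 0 <= c <= 1 /\
    dot lam (vsub (vsub (g y) (g xbar)) (mapp (J xbar) (vsub y xbar)))
      - / 2 * quad_form (hess_lag H lam) (vsub y xbar)
    = dot lam (mapp (J (vadd xbar (vscal c (vsub y xbar)))) (vsub y xbar))
      - dot lam (mapp (J xbar) (vsub y xbar)) - c * quad_form (hess_lag H lam) (vsub y xbar).
Proof.
move=> hy; set h := vsub y xbar in hy *.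
set a := dot lam (mapp (J xbar) h); set b := / 2 * quad_form (hess_lag H lam) h.
pose G s := dot lam (g (vadd xbar (vscal s h))).
pose P s := a * s + b * (s * s).
have hder s : 0 <= s <= 1 -> derivable_pt_lim (minus_fct G P) s
    (dot lam (mapp (J (vadd xbar (vscal s h))) h) - (a + 2 * b * s)).
  move=> hs; apply: derivable_pt_lim_minus; last exact: derivable_pt_lim_quadratic.
  apply/derivable_pt_lim_dot_line/g_diff.
  have -> : vsub (vadd xbar (vscal s h)) xbar = vscal s h by vext.
  by rewrite vnorm_scal Rabs_pos_eq; [have := vnorm_ge0 h; nra | lra].
have [c [hc hc01]] := MVT_cor2 _ _ 0 1 Rlt_0_1 hder.
exists c; split; first lra.
rewrite /minus_fct /G /P in hc.
have e1 : vadd xbar (vscal 1 h) = y by rewrite /h; vext.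
have e0 : vadd xbar (vscal 0 h) = xbar by vext.
rewrite e1 e0 in hc.
rewrite !dot_subr -/a; move: hc; rewrite /b; lra.
Qed.

Lemma second_order_expansion lam eta : 0 < delta -> 0 < eta ->
  exists d, 0 < d /\ forall y, vnorm (vsub y xbar) < d ->
    Rabs (dot lam (vsub (vsub (g y) (g xbar)) (mapp (J xbar) (vsub y xbar)))
          - / 2 * quad_form (hess_lag H lam) (vsub y xbar))
    <= eta * (vnorm (vsub y xbar) * vnorm (vsub y xbar)).
Proof.
move=> hdel heta.
set K := \big[Rplus/0]_(i < l) Rabs (lam i).
have hK : 0 <= K by apply: sumR_ge0 => i; apply: Rabs_pos.
set eta' := eta / (K + 1).
have heta' : 0 < eta' by apply: Rdiv_lt_0_compat; lra.
have [d0 [hd0 hP]] := @finite_uniform_delta l (fun i d => forall z, vnorm (vsub z xbar) < d ->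
    vnorm (vsub (vsub (J z i) (J xbar i)) (mapp (H i) (vsub z xbar))) <= eta' * vnorm (vsub z xbar))
  ltac:(move=> i d d' hPd [hd' hle] z hz; apply: hPd; lra)
  ltac:(move=> i; have [d [hd hh]] := J_diff i heta'; by exists d).
exists (Rmin d0 delta); split; first exact: Rmin_pos.
move=> y hy; set h := vsub y xbar; set w := vnorm h.
have hw : 0 <= w := vnorm_ge0 h.
have [c [hc ->]] := second_order_mvt lam (Rlt_le_trans _ _ _ hy (Rmin_r _ _)).
set z := vadd xbar (vscal c h).
have hz : vsub z xbar = vscal c h by rewrite /z; vext.
have hzn : vnorm (vsub z xbar) <= w.
  rewrite hz vnorm_scal Rabs_pos_eq /w; last lra.
  by have := vnorm_ge0 h; nra.
have -> : dot lam (mapp (J z) h) - dot lam (mapp (J xbar) h) - c * quad_form (hess_lag H lam) h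
    = \big[Rplus/0]_(i < l)
        (lam i * dot (vsub (vsub (J z i) (J xbar i)) (mapp (H i) (vsub z xbar))) h).
  have row A : dot lam (mapp A h) = \big[Rplus/0]_(i < l) (lam i * dot (A i) h) by [].
  rewrite quad_form_hess_lag !row -sumR_mul_l -!sumR_sub.
  apply: eq_bigr => i _; rewrite hz mapp_scal !dot_subl dot_scall /quad_form; ring.
apply: Rle_trans (Rabs_sumR_le _ _) _.
apply: (Rle_trans _ (\big[Rplus/0]_(i < l) (Rabs (lam i) * (eta' * w * w)))).
  apply: sumR_le => i; rewrite Rabs_mult; apply: Rmult_le_compat_l; first exact: Rabs_pos.
  apply: Rle_trans (Rabs_dot_le _ _) _; apply: Rmult_le_compat_r; first exact: vnorm_ge0.
  apply: Rle_trans (hP i z _) _; last by apply: Rmult_le_compat_l; lra.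
  by have := Rmin_l d0 delta; rewrite -/h -/w in hy; lra.
rewrite sumR_mul_r -/K.
suff : K * eta' <= eta by have := Rmult_le_pos _ _ hw hw; nra.
have -> : K * eta' = eta * (K / (K + 1)) by rewrite /eta'; field; lra.
by have := Rdiv_le_1 (ltac:(lra) : 0 < K + 1) (ltac:(lra) : K <= K + 1); nra.
Qed.

End SecondOrder.

Lemma vnorm_sub_scal_le {n} (a w : vec n) s : 0 < vnorm a ->
  vnorm (vsub a (vscal s w))
  <= vnorm a - s * dot a w / vnorm a + s * s * (vnorm w * vnorm w) / (2 * vnorm a).
Proof.
move=> ha; set y := vnorm (vsub a (vscal s w)).
have hy : y * y = vnorm a * vnorm a - 2 * (s * dot a w) + s * s * (vnorm w * vnorm w).
  have hs : Rabs s * Rabs s = s * s by rewrite -Rabs_mult Rabs_pos_eq; nra.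
  rewrite /y vnorm_sub_sqr dot_scalr vnorm_scal.
  have -> : Rabs s * vnorm w * (Rabs s * vnorm w) = Rabs s * Rabs s * (vnorm w * vnorm w) by ring.
  by rewrite hs; ring.
have h : 2 * vnorm a * y <= y * y + vnorm a * vnorm a.
  by have := Rle_0_sqr (y - vnorm a); rewrite /Rsqr; lra.
 apply: (Rmult_le_reg_l (2 * vnorm a)); first lra.
have -> : 2 * vnorm a * (vnorm a - s * dot a w / vnorm a
            + s * s * (vnorm w * vnorm w) / (2 * vnorm a))
        = 2 * (vnorm a * vnorm a) - 2 * (s * dot a w) + s * s * (vnorm w * vnorm w) by field; lra.
lra.
Qed.

Lemma fdiff_calm {n m} (f : vec n -> vec m) x A : fdiff f x A ->
  exists d K, 0 < d /\ 0 <= K /\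
    forall y, vnorm (vsub y x) < d -> vnorm (vsub (f y) (f x)) <= K * vnorm (vsub y x).
Proof.
move=> hf; have [d [hd h]] := hf 1 Rlt_0_1.
exists d, (mnorm A + 1); split => //; split; first by have := mnorm_ge0 A; lra.
move=> y /h h1.
have -> : vsub (f y) (f x)
    = vadd (vsub (vsub (f y) (f x)) (mapp A (vsub y x))) (mapp A (vsub y x)) by vext.
by apply: Rle_trans (vnorm_triangle _ _) _; have := vnorm_mapp_le A (vsub y x); lra.
Qed.

Lemma fdiff_cv_vec {n m} (f : vec n -> vec m) x A (xk : nat -> vec n) :
  fdiff f x A -> cv_vec xk x -> cv_vec (fun k => f (xk k)) (f x).
Proof.
move=> /fdiff_calm [d [K [hd [hK hcalm]]]] /cv_vecP hx; apply/cv_vecP => eps he.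
have hK1 : 0 < K + 1 by lra.
have [N hN] := hx (Rmin d (eps / (K + 1))) (Rmin_pos _ _ hd (Rdiv_lt_0_compat _ _ he hK1)).
exists N => k /hN hk; apply: Rle_lt_trans (hcalm _ (Rlt_le_trans _ _ _ hk (Rmin_l _ _))) _.
have := Rlt_le_trans _ _ _ hk (Rmin_r _ _) => /(Rmult_lt_compat_r (K + 1) _ _ hK1).
have -> : eps / (K + 1) * (K + 1) = eps by field; lra.
by have := vnorm_ge0 (vsub (xk k) x); nra.
Qed.

Lemma Un_cv_vnorm_sub {n} (a b : nat -> vec n) (a0 b0 : vec n) :
  cv_vec a a0 -> cv_vec b b0 ->
  Un_cv (fun k => vnorm (vsub (a k) (b k))) (vnorm (vsub a0 b0)).
Proof.
move=> /cv_vecP ha /cv_vecP hb eps he.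
have [N1 hN1] := ha (eps / 2) ltac:(lra); have [N2 hN2] := hb (eps / 2) ltac:(lra).
exists (N1 + N2)%coq_nat => k hk; rewrite /R_dist.
have h1 := hN1 k ltac:(lia); have h2 := hN2 k ltac:(lia).
have t1 := vnorm_sub_triangle (a k) a0 (b k); have t2 := vnorm_sub_triangle a0 b0 (b k).
have t3 := vnorm_sub_triangle a0 (a k) b0; have t4 := vnorm_sub_triangle (a k) (b k) b0.
rewrite (vnorm_subC b0 (b k)) in t2; rewrite (vnorm_subC a0 (a k)) in t3.
by apply: Rabs_def1; lra.
Qed.

Lemma closed_ball_limit {n} (w : nat -> vec n) (v x0 : vec n) r :
  (forall k, vnorm (vsub (w k) x0) <= r) -> cv_vec w v -> vnorm (vsub v x0) <= r.
Proof.
move=> hw hc.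
exact: Rle_cv_lim hw (Un_cv_vnorm_sub hc (cv_vec_const x0)) (Un_cv_const r).
Qed.

Lemma proximal_reg_normal {l} (C : vec l -> Prop) p c0 :
  C c0 -> (forall c, C c -> vnorm (vsub p c0) <= vnorm (vsub p c)) -> 0 < vnorm (vsub p c0) ->
  reg_normal C c0 (normalize (vsub p c0)).
Proof.
move=> hc0 hmin hpos; split => // eps he.
set et := vnorm (vsub p c0) in hmin hpos *.
exists (2 * et * eps); split; first by apply: Rmult_lt_0_compat => //; lra.
move=> c hc hlt; set r := vnorm (vsub c c0) in hlt *.
have hr : 0 <= r := vnorm_ge0 _.
(* |p - c|^2 = |p - c0|^2 - 2 <p - c0, c - c0> + |c - c0|^2 and |p - c0| <= |p - c| *)
have hdot : 2 * dot (vsub p c0) (vsub c c0) <= r * r.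
  have := vnorm_sub_sqr (vsub p c0) (vsub c c0).
  have -> : vsub (vsub p c0) (vsub c c0) = vsub p c by vext.
  by have := hmin c hc; have := vnorm_ge0 (vsub p c); rewrite -/et -/r; nra.
rewrite /normalize dot_scall.
apply: (Rmult_le_reg_l et); first by [].
rewrite -Rmult_assoc Rinv_r; last lra.
by nra.
Qed.

Definition penalty {n l} (g : vec n -> vec l) (x0 : vec n) (mu : R) (x : vec n) (c : vec l) :=
  vnorm (vsub (g x) c) + mu * vnorm (vsub x x0).

Lemma exists_small_step D W d1 rho q : 0 < D -> 0 < d1 -> 0 < rho -> 0 < q ->
  exists s, 0 < s /\ s * D < d1 /\ s * D <= rho /\ s * (W * W) < q.
Proof.
move=> hD hd1 hrho hq.
have hW1 : 0 < W * W + 1 by nra.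
exists (Rmin (Rmin (d1 / (2 * D)) (rho / D)) (q / (W * W + 1))).
set s := Rmin _ _.
have hs1 : s <= d1 / (2 * D) by apply: Rle_trans (Rmin_l _ _) (Rmin_l _ _).
have hs2 : s <= rho / D by apply: Rle_trans (Rmin_l _ _) (Rmin_r _ _).
have hs3 : s <= q / (W * W + 1) by apply: Rmin_r.
split; first by apply: Rmin_pos; [apply: Rmin_pos |]; apply: Rdiv_lt_0_compat; lra.
split.
  have := Rmult_le_compat_r D _ _ (Rlt_le _ _ hD) hs1.
  have -> : d1 / (2 * D) * D = d1 / 2 by field; lra.
  by move=> ?; lra.
split.
  have := Rmult_le_compat_r D _ _ (Rlt_le _ _ hD) hs2.
  by have -> : rho / D * D = rho by field; lra.
have := Rmult_le_compat_r (W * W + 1) _ _ (Rlt_le _ _ hW1) hs3.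
have -> : q / (W * W + 1) * (W * W + 1) = q by field; lra.
by move=> ?; nra.
Qed.

(* Moving from [xt] in the direction [-J^T lam] decreases [|g x - c|] at rate
   [|J^T lam|^2], which beats the penalty growth rate [mu |J^T lam|] unless [|J^T lam| <= mu]. *)
Lemma penalty_local_min_stationary {n l} (g : vec n -> vec l) (Jt : mat l n) xt x0 ct mu rho :
  fdiff g xt Jt -> 0 < vnorm (vsub (g xt) ct) -> 0 <= mu -> 0 < rho ->
  (forall x, vnorm (vsub x xt) <= rho -> penalty g x0 mu xt ct <= penalty g x0 mu x ct) ->
  vnorm (mtapp Jt (normalize (vsub (g xt) ct))) <= mu.
Proof.
move=> hf hpos hmu hrho hmin; rewrite /penalty in hmin.
set a := vsub (g xt) ct in hpos hmin *; set et := vnorm a in hpos hmin *.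
set d := mtapp Jt (normalize a); set D := vnorm d.
set w := mapp Jt d; set W := vnorm w.
apply: Rnot_lt_le => hD.
have hW : 0 <= W := vnorm_ge0 w.
have haw : dot a w = et * (D * D).
  rewrite -(normalizeK hpos) dot_scall /w dot_mapp -/d.
  by rewrite -vnorm_sqr.
have heta : 0 < (D - mu) / 2 by lra.
have [d1 [hd1 hfd]] := hf _ heta.
have hD0 : 0 < D by lra.
have [s [hs0 [hs1 [hs2 hs3]]]] := @exists_small_step D W d1 rho (et * (D * (D - mu))) hD0 hd1 hrho
  ltac:(apply: Rmult_lt_0_compat => //; nra).
set x := vsub xt (vscal s d).
have hxx : vsub x xt = vscal (- s) d by rewrite /x; vext.
have hnx : vnorm (vsub x xt) = s * D by rewrite hxx vnorm_scal Rabs_Ropp Rabs_pos_eq //; lra.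
have hgx : vnorm (vsub (g x) ct)
    <= et - s * (D * D) + s * s * (W * W) / (2 * et) + (D - mu) / 2 * (s * D).
  have -> : vsub (g x) ct
      = vadd (vsub a (vscal s w)) (vsub (vsub (g x) (g xt)) (mapp Jt (vsub x xt))).
    by rewrite hxx mapp_scal /w /a; vext.
  apply: Rle_trans (vnorm_triangle _ _) _.
  have := vnorm_sub_scal_le w s hpos; rewrite haw -/et -/W.
  have -> : s * (et * (D * D)) / et = s * (D * D) by field; lra.
  by have := hfd x ltac:(lra); rewrite hnx; lra.
have hx0 : vnorm (vsub x x0) <= s * D + vnorm (vsub xt x0).
  by rewrite -hnx; apply: vnorm_sub_triangle.
have := hmin x ltac:(lra).
have : 0 <= s * s * (W * W) / (2 * et) < s * (D * (D - mu) / 2).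
  split; first by apply: Rmult_le_pos; [nra | apply/Rlt_le/Rinv_0_lt_compat; lra].
  have -> : s * s * (W * W) / (2 * et) = s * (s * (W * W) / (2 * et)) by field; lra.
  apply: Rmult_lt_compat_l => //; apply: (Rmult_lt_reg_r (2 * et)); first lra.
  by rewrite /Rdiv Rmult_assoc Rinv_l; nra.
by have := Rmult_le_compat_l _ _ _ hmu hx0; nra.
Qed.

Section PenaltyMinimizer.
Variables (n l : nat) (C : vec l -> Prop) (g : vec n -> vec l) (x0 : vec n) (R0 mu : R).
Hypotheses (C_closed : is_closed C) (hR0 : 0 <= R0) (hmu : 0 <= mu).
Hypothesis g_cont : forall y (yk : nat -> vec n),
  vnorm (vsub y x0) <= R0 -> cv_vec yk y -> cv_vec (fun k => g (yk k)) (g y).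

Let Phi := penalty g x0 mu.

Lemma penalty_cv (xk : nat -> vec n) (ck : nat -> vec l) x c :
  vnorm (vsub x x0) <= R0 -> cv_vec xk x -> cv_vec ck c ->
  Un_cv (fun k => Phi (xk k) (ck k)) (Phi x c).
Proof.
move=> hx hxk hck; apply: CV_plus; first exact: Un_cv_vnorm_sub (g_cont hx hxk) hck.
exact: CV_mult (Un_cv_const mu) (Un_cv_vnorm_sub hxk (cv_vec_const x0)).
Qed.

(* A minimizing sequence has bounded [x]-part (the ball) and, by continuity of [g]
   at a cluster point, eventually bounded [c]-part; closedness of [C] keeps the limit. *)
Lemma penalty_minimizer c0 : C c0 ->
  exists xt ct, vnorm (vsub xt x0) <= R0 /\ C ct /\
    forall x c, vnorm (vsub x x0) <= R0 -> C c -> Phi xt ct <= Phi x c.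
Proof.
move=> hc0.
have hPhi0 x c : 0 <= Phi x c.
  by rewrite /Phi /penalty; have := vnorm_ge0 (vsub (g x) c); have := vnorm_ge0 (vsub x x0); nra.
have [m [_ [_ [hmlb hmapp]]]] := @Rbar_inf_finite
  (fun v => exists x c, vnorm (vsub x x0) <= R0 /\ C c /\ v = Phi x c) 0 (Phi x0 c0)
  ltac:(by exists x0, c0; rewrite vnorm_subxx) ltac:(by move=> v [x [c [_ [_ ->]]]]).
have [f hf] : exists f : nat -> vec n * vec l, forall j,
    vnorm (vsub (f j).1 x0) <= R0 /\ C (f j).2 /\ Phi (f j).1 (f j).2 <= m + / (INR j + 1).
  apply: (@choice_nat _ (fun j (p : vec n * vec l) => vnorm (vsub p.1 x0) <= R0 /\ C p.2 /\
    Phi p.1 p.2 <= m + / (INR j + 1))) => j.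
  have [v [[x [c [hx [hc ->]]]] hv]] := hmapp _ (Rinv_0_lt_compat _ (INR_succ_pos j)).
  by exists (x, c) => /=; split => //; split => //; lra.
have [phi1 [xst [hp1 hcv1]]] := @Bolzano_Weierstrass_vec _ (fun j => (f j).1) (vnorm x0 + R0)
  ltac:(by move=> j; have := vnorm_le_sub_add (f j).1 x0; have := (hf j).1; lra).
have hxst : vnorm (vsub xst x0) <= R0 by apply: closed_ball_limit hcv1 => j; exact: (hf _).1.
have [N hN] := cv_vec_eventually (g_cont hxst hcv1) Rlt_0_1.
have [phi2 [cst [hp2 hcv2]]] : exists phi c,
    strictly_increasing phi /\ cv_vec (fun j => (f (phi1 (phi j))).2) c.
  apply: (@Bolzano_Weierstrass_vec_eventually _ (fun j => (f (phi1 j)).2)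
    (vnorm (g xst) + 1 + (m + 1)) N) => j /hN hj.
  have [_ [_ hPhi]] := hf (phi1 j).
  have := vnorm_le_sub_add (f (phi1 j)).2 (g (f (phi1 j)).1).
  have := vnorm_le_sub_add (g (f (phi1 j)).1) (g xst).
  have := vnorm_ge0 (vsub (f (phi1 j)).1 x0); have := inv_INR_succ_le_1 (phi1 j).
  rewrite (vnorm_subC (f (phi1 j)).2) /Phi /penalty in hPhi *; move=> *; nra.
pose psi j := phi1 (phi2 j).
have hpsi : strictly_increasing psi by exact: strictly_increasing_comp.
have hCst : C cst by apply: (C_closed (xk := fun j => (f (psi j)).2)) => // j; exact: (hf _).2.1.
exists xst, cst; split => //; split => // x c hx hc.
suff : Phi xst cst <= m by have := hmlb (Phi x c) ltac:(by exists x, c); lra.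
apply: (Rle_cv_lim (Un := fun j => Phi (f (psi j)).1 (f (psi j)).2)
                   (Vn := fun j => m + / (INR j + 1))).
- move=> j; apply: Rle_trans (hf (psi j)).2.2 _.
  by have := inv_INR_succ_le (strictly_increasing_ge hpsi j); lra.
- exact: penalty_cv hxst (cv_vec_subseq hp2 hcv1) hcv2.
- rewrite -{2}(Rplus_0_r m); apply: CV_plus (Un_cv_const m) _.
  apply: (Un_cv_le_inv_INR (c := 1)) => j.
  by split; [apply/Rlt_le/Rinv_0_lt_compat/INR_succ_pos | lra].
Qed.

End PenaltyMinimizer.

(* Minimize [penalty g x0 (4 eps / r)] over the ball of radius [r / 2]: comparing with
   [x0] keeps the minimizer within [r / 4] of [x0], so it is interior, misses [g^-1(C)],
   and both the proximal-normal and the stationarity lemma apply. *)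
Lemma exists_normal_small_adjoint {n l} (C : vec l -> Prop) (g : vec n -> vec l)
    (J : vec n -> mat l n) x0 r eps :
  is_closed C -> 0 < r ->
  (forall y, vnorm (vsub y x0) <= r / 2 -> fdiff g y (J y)) ->
  (forall y, C (g y) -> r <= vnorm (vsub x0 y)) ->
  (forall eta, 0 < eta -> exists c, C c /\ vnorm (vsub (g x0) c) < eps + eta) ->
  exists xt ct, C ct /\ 0 < vnorm (vsub (g xt) ct) /\ vnorm (vsub (g xt) ct) <= eps /\
    vnorm (vsub xt x0) <= r / 4 /\
    reg_normal C ct (normalize (vsub (g xt) ct)) /\
    vnorm (mtapp (J xt) (normalize (vsub (g xt) ct))) <= 4 * eps / r.
Proof.
move=> hC hr hg hS hdist.
have heps : 0 <= eps.
  apply: Rnot_lt_le => hlt; have [c [_ hc]] := hdist (- eps / 2) ltac:(lra).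
  by have := vnorm_ge0 (vsub (g x0) c); lra.
have [c0 [hc0 _]] := hdist 1 Rlt_0_1.
set mu := 4 * eps / r.
have hmu : 0 <= mu by apply: Rmult_le_pos; [lra | left; apply: Rinv_0_lt_compat].
have [xt [ct [hxt [hct hmin]]]] := @penalty_minimizer n l C g x0 (r / 2) mu hC ltac:(lra) hmu
  (fun y yk hy => fdiff_cv_vec (hg y hy)) c0 hc0.
rewrite /penalty in hmin.
set et := vnorm (vsub (g xt) ct) in hmin *.
have hphi : et + mu * vnorm (vsub xt x0) <= eps.
  apply: Rnot_lt_le => hlt.
  have [c [hc hcl]] := hdist (et + mu * vnorm (vsub xt x0) - eps) ltac:(lra).
  by have := hmin x0 c ltac:(rewrite vnorm_subxx; lra) hc; rewrite vnorm_subxx; lra.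
have hmx : 0 <= mu * vnorm (vsub xt x0) by apply: Rmult_le_pos => //; apply: vnorm_ge0.
have hetpos : 0 < et.
  have [//|h0] := Rle_lt_or_eq_dec _ _ (vnorm_ge0 (vsub (g xt) ct)).
  have hgc : g xt = ct by apply: vnorm_sub_eq0; rewrite -h0.
  by have := hS xt; rewrite hgc vnorm_subC => /(_ hct); lra.
have hx4 : vnorm (vsub xt x0) <= r / 4.
  have hepspos : 0 < eps by lra.
  have -> : vnorm (vsub xt x0) = r / (4 * eps) * (mu * vnorm (vsub xt x0)).
    by rewrite /mu; field; lra.
  have -> : r / 4 = r / (4 * eps) * eps by field; lra.
  by apply: Rmult_le_compat_l; [apply/Rlt_le/Rdiv_lt_0_compat; lra | lra].
exists xt, ct; rewrite -/et; split => //; split => //; split; first lra; split => //; split.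
  apply: proximal_reg_normal hct _ hetpos => c hc.
  by have := hmin xt c hxt hc; rewrite -/et; lra.
apply: (penalty_local_min_stationary (x0 := x0) (rho := r / 4) (hg _ hxt) hetpos hmu) => [|x hx].
  lra.
rewrite /penalty -/et; apply: hmin => //.
by have := vnorm_sub_triangle x xt x0; lra.
Qed.

Lemma quad_form_cv {n} (M : mat n n) (a : nat -> vec n) v :
  cv_vec a v -> Un_cv (fun k => quad_form M (a k)) (quad_form M v).
Proof.
move=> /cv_vecP ha eps he.
have hM := mnorm_ge0 M; have hv := vnorm_ge0 v.
set K := mnorm M * (2 * vnorm v + 1) + 1.
have hK : 0 < K by rewrite /K; nra.
have [N hN] := ha (Rmin 1 (eps / K)) (Rmin_pos _ _ Rlt_0_1 (Rdiv_lt_0_compat _ _ he hK)).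
exists N => k /hN hk; rewrite /R_dist.
have h1 := Rlt_le_trans _ _ _ hk (Rmin_l _ _).
have := Rmult_lt_compat_r K _ _ hK (Rlt_le_trans _ _ _ hk (Rmin_r _ _)).
have -> : eps / K * K = eps by field; lra.
move=> hlt; apply: Rle_lt_trans (quad_form_sub_le M (a k) v) _.
have hb : mnorm M * (vnorm (a k) + vnorm v) <= K.
  by have := vnorm_le_sub_add (a k) v; rewrite /K; nra.
by have := Rmult_le_compat_r _ _ _ (vnorm_ge0 (vsub (a k) v)) hb; lra.
Qed.

Section LimitingPair.
Variables (n l : nat) (C : vec l -> Prop) (g : vec n -> vec l) (xbar : vec n).
Variables (J : vec n -> mat l n) (H : 'I_l -> mat n n) (delta : R).
Hypotheses (hdelta : 0 < delta)
  (g_diff : forall y, vnorm (vsub y xbar) < delta -> fdiff g y (J y))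
  (J_cont : forall y, vnorm (vsub y xbar) < delta -> forall i, cont_at (fun z => J z i) y)
  (J_diff : forall i, fdiff (fun z => J z i) xbar (H i)).
Variables (xs : nat -> vec n) (cs : nat -> vec l) (u : vec n) (lam : vec l).

Let t k := vnorm (vsub (xs k) xbar).
Let e k := vnorm (vsub (g (xs k)) (cs k)).
Let uk k := normalize (vsub (xs k) xbar).
Let lk k := normalize (vsub (g (xs k)) (cs k)).

Hypotheses (cs_in : forall k, C (cs k))
  (t_pos : forall k, 0 < t k) (t_cv : Un_cv t 0)
  (e_pos : forall k, 0 < e k) (e_t_cv : Un_cv (fun k => e k / t k) 0)
  (lk_normal : forall k, reg_normal C (cs k) (lk k))
  (adjoint_cv : Un_cv (fun k => vnorm (mtapp (J (xs k)) (lk k))) 0)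
  (u_cv : cv_vec uk u) (lam_cv : cv_vec lk lam).

Lemma limit_u_unit : vnorm u = 1.
Proof. by apply: (cv_vec_unit u_cv) => k; exact: vnorm_normalize (t_pos k). Qed.

Lemma limit_lam_unit : vnorm lam = 1.
Proof. by apply: (cv_vec_unit lam_cv) => k; exact: vnorm_normalize (e_pos k). Qed.

Lemma xs_cv : cv_vec xs xbar.
Proof. by move=> eps /t_cv [N hN]; exists N => k /hN. Qed.

Lemma xbar_in_ball : vnorm (vsub xbar xbar) < delta.
Proof. by rewrite vnorm_subxx. Qed.

Lemma limit_adjoint_zero : mtapp (J xbar) lam = vzero.
Proof.
apply: functional_extensionality => j.
have J_cv i : Un_cv (fun k => J (xs k) i j) (J xbar i j).
  move=> eps he; have [d [hd hcd]] := J_cont xbar_in_ball i he.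
  have [N hN] := cv_vec_eventually xs_cv hd; exists N => k /hN hk.
  exact: Rle_lt_trans (vnorm_coord_le (vsub (J (xs k) i) (J xbar i)) j) (hcd _ hk).
apply: (UL_sequence (fun k => mtapp (J (xs k)) (lk k) j)).
  by apply: sumR_cv => i; apply: CV_mult (J_cv i) (cv_vec_coord i lam_cv).
move=> eps /adjoint_cv [N hN]; exists N => k /hN.
rewrite /R_dist !Rminus_0_r Rabs_pos_eq; last exact: vnorm_ge0.
exact/Rle_lt_trans/vnorm_coord_le.
Qed.

Lemma dot_lam_range x : dot lam (mapp (J xbar) x) = 0.
Proof. by rewrite dot_mapp limit_adjoint_zero dot0l. Qed.

Let w k := vscal (/ t k) (vsub (cs k) (g xbar)).

Lemma w_shift k : vadd (g xbar) (vscal (t k) (w k)) = cs k.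
Proof.
have := t_pos k => h; apply: functional_extensionality => i.
by rewrite /w /vadd /vscal /vsub; field; lra.
Qed.

Let rem k := vsub (vsub (g (xs k)) (g xbar)) (mapp (J xbar) (vsub (xs k) xbar)).

Lemma rem_small eta : 0 < eta -> eventually (fun k => vnorm (rem k) <= eta * t k).
Proof.
move=> he; have [d [hd hdd]] := g_diff xbar_in_ball he.
have [N hN] := cv_vec_eventually xs_cv hd; exists N => k /hN; exact: hdd.
Qed.

Lemma w_decomp k :
  vsub (w k) (mapp (J xbar) u)
  = vadd (vadd (vscal (/ t k) (rem k)) (mapp (J xbar) (vsub (uk k) u)))
         (vscal (- (e k / t k)) (lk k)).
Proof.
rewrite mapp_sub /uk /lk /normalize mapp_scal /w /rem -/(t k) -/(e k).
have := t_pos k; have := e_pos k => he ht.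
by apply: functional_extensionality => i; rewrite /vadd /vsub /vscal; field; lra.
Qed.

Lemma w_cv : cv_vec w (mapp (J xbar) u).
Proof.
apply/cv_vecP => eps heps.
have hM := mnorm_ge0 (J xbar).
have he4 : 0 < eps / 4 by lra.
have hK : 0 < eps / 4 / (mnorm (J xbar) + 1) by apply: Rdiv_lt_0_compat; lra.
have [N hN] := eventually_and (rem_small he4) (eventually_and (cv_vec_eventually u_cv hK)
  (Un_cv_eventually e_t_cv he4)).
exists N => k /hN [h1 [h2 h3]].
have ht := t_pos k; have he := e_pos k.
rewrite w_decomp; apply: Rle_lt_trans (vnorm_triangle _ _) _.
have hlk1 : vnorm (lk k) = 1 := vnorm_normalize (e_pos k).
rewrite [vnorm (vscal (- _) _)]vnorm_scal hlk1 Rabs_Ropp Rmult_1_r.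
apply: Rle_lt_trans (Rplus_le_compat_r _ _ _ (vnorm_triangle _ _)) _.
have hinv : 0 <= / t k by left; apply: Rinv_0_lt_compat.
have hq : 0 <= e k / t k by left; apply: Rdiv_lt_0_compat.
rewrite vnorm_scal !Rabs_pos_eq //.
rewrite Rminus_0_r Rabs_pos_eq in h3 => //.
have b1 : / t k * vnorm (rem k) <= eps / 4.
  apply: (Rmult_le_reg_l (t k)) => //; rewrite -Rmult_assoc Rinv_r; lra.
have b2 : vnorm (mapp (J xbar) (vsub (uk k) u)) < eps / 4.
  apply: Rle_lt_trans (vnorm_mapp_le _ _) _.
  have := Rmult_lt_compat_r (mnorm (J xbar) + 1) _ _ ltac:(lra) h2.
  have -> : eps / 4 / (mnorm (J xbar) + 1) * (mnorm (J xbar) + 1) = eps / 4 by field; lra.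
  by have := vnorm_ge0 (vsub (uk k) u); nra.
lra.
Qed.

Lemma tangent_limit : tangent_cone C (g xbar) (mapp (J xbar) u).
Proof. by exists t, w; split; [split | split; [exact: w_cv | move=> k; rewrite w_shift]]. Qed.

Lemma dir_normal_limit : dir_normal C (g xbar) (mapp (J xbar) u) lam.
Proof.
exists t, w, lk; split; first by split.
by split; [exact: w_cv | split => // k; rewrite w_shift].
Qed.

Lemma curvature_quotient k :
  dot lam (vsub (w k) (mapp (J xbar) u)) / t k
  = (dot lam (rem k) - e k * dot lam (lk k)) / (t k * t k).
Proof.
rewrite w_decomp; move: (rem k) (lk k) => r0 l0.
rewrite !dot_addr !dot_scalr dot_lam_range.
by have := t_pos k; move=> ht; field; lra.
Qed.

Lemma dot_lam_lk_ge0 k : vnorm (vsub (lk k) lam) < / 2 -> 0 <= dot lam (lk k).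
Proof.
move=> hk.
have -> : dot lam (lk k) = dot lam lam + dot lam (vsub (lk k) lam) by rewrite dot_subr; ring.
rewrite -vnorm_sqr limit_lam_unit.
by have := Rabs_dot_le lam (vsub (lk k) lam); rewrite limit_lam_unit => /Rabs_le_inv; lra.
Qed.

Lemma curvature_limit_le :
  Rbar_le (lower_curv C lam (g xbar) (mapp (J xbar) u))
          (Fin_r (/ 2 * quad_form (hess_lag H lam) u)).
Proof.
apply: lower_curv_le => eps eta he heta.
have heta2 : 0 < eta / 2 by lra.
have hinv2 : 0 < / 2 by lra.
have [dT [hdT hT]] := second_order_expansion g_diff J_diff lam hdelta heta2.
have [k [[ht1 ht2] [hwk [[hl1 hl2] hq]]]] := eventually_witness (eventually_and
  (eventually_and (Un_cv_eventually t_cv he) (Un_cv_eventually t_cv hdT))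
  (eventually_and (cv_vec_eventually w_cv he)
  (eventually_and
     (eventually_and (cv_vec_eventually lam_cv he) (cv_vec_eventually lam_cv hinv2))
     (Un_cv_eventually (quad_form_cv (hess_lag H lam) u_cv) heta2)))).
have htk := t_pos k.
rewrite Rminus_0_r Rabs_pos_eq in ht1 ht2; try lra.
exists (t k), (w k); split; first lra; split => //; split.
  rewrite w_shift; apply: (dist_set_lt (y := lk k)); first exact: reg_normal_lim_normal.
  by rewrite vnorm_subC.
rewrite curvature_quotient.
have hlk := dot_lam_lk_ge0 hl2; have hek := e_pos k.
have := hT (xs k) ht2; rewrite -/(rem k) -/(t k) -(normalizeK htk) quad_form_scal -/(uk k).
rewrite -[vnorm (vsub (xs k) xbar)]/(t k).
move=> /Rabs_le_inv [_ hrem]; move: hq => /Rabs_def2 [hq _].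
have htt : 0 < t k * t k by nra.
apply: (Rmult_le_reg_r (t k * t k)) => //.
rewrite /Rdiv Rmult_assoc Rinv_l; last lra.
have := Rmult_le_compat_l _ _ _ (Rlt_le _ _ htt) (Rlt_le _ _ hq).
by have := Rmult_le_pos _ _ (Rlt_le _ _ hek) hlk; nra.
Qed.

Lemma limiting_pair :
  u <> vzero /\ tangent_cone C (g xbar) (mapp (J xbar) u) /\
  dir_normal C (g xbar) (mapp (J xbar) u) lam /\ mtapp (J xbar) lam = vzero /\
  Rbar_le (lower_curv C lam (g xbar) (mapp (J xbar) u))
          (Fin_r (/ 2 * quad_form (hess_lag H lam) u)) /\
  lam <> vzero.
Proof.
split; first exact/vnorm_neq0/limit_u_unit.
split; first exact: tangent_limit.
split; first exact: dir_normal_limit.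
split; first exact: limit_adjoint_zero.
by split; [exact: curvature_limit_le | exact/vnorm_neq0/limit_lam_unit].
Qed.

End LimitingPair.

Section NotSubregular.
Variables (n l : nat) (C : vec l -> Prop) (g : vec n -> vec l) (xbar : vec n).
Variables (J : vec n -> mat l n) (delta : R).
Hypotheses (C_closed : is_closed C) (gxbar_in : C (g xbar)) (hdelta : 0 < delta)
  (g_diff : forall y, vnorm (vsub y xbar) < delta -> fdiff g y (J y))
  (not_subregular : ~ metric_subregular g C xbar).

(* Failure of subregularity with modulus [k + 1] on the ball of radius [delta / (4 (k + 1))]
   produces a point [x] there, to which [exists_normal_small_adjoint] applies. *)
Lemma not_subregular_witness k : exists p : vec n * vec l,
  C p.2 /\ 0 < vnorm (vsub (g p.1) p.2) /\ 0 < vnorm (vsub p.1 xbar) /\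
  vnorm (vsub p.1 xbar) <= delta / 2 / (INR k + 1) /\
  vnorm (vsub (g p.1) p.2) <= 2 / (INR k + 1) * vnorm (vsub p.1 xbar) /\
  reg_normal C p.2 (normalize (vsub (g p.1) p.2)) /\
  vnorm (mtapp (J p.1) (normalize (vsub (g p.1) p.2))) <= 4 / (INR k + 1).
Proof.
set K := INR k + 1.
have hK : 1 <= K by have := pos_INR k; rewrite /K; lra.
have hd : 0 < delta / 4 / K by apply: Rdiv_lt_0_compat; lra.
have hd2 : delta / 4 / K <= delta / 4.
  have : / K <= 1 by rewrite -Rinv_1; apply: Rinv_le_contravar; lra.
  by rewrite /Rdiv; nra.
have [x [hx hnle]] : exists x, vnorm (vsub x xbar) < delta / 4 / K /\
    ~ Rbar_le (dist_set (fun y => C (g y)) x) (Fin_r (K * real_of (dist_set C (g x)))).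
  apply: NNPP => hno; apply: not_subregular; exists K, (delta / 4 / K).
  split; first lra; split => // x hx; apply: NNPP => hn; apply: hno; by exists x.
have [r [hr [hr0 [hrS hrA]]]] := dist_set_finite (S := fun y => C (g y)) x gxbar_in.
have [eps [heps [heps0 [heS heA]]]] := dist_set_finite (S := C) (g x) gxbar_in.
rewrite hr heps /= in hnle; move/Rnot_le_lt: hnle => hnle.
have hrpos : 0 < r by nra.
have hrx : r <= vnorm (vsub x xbar) by apply: hrS.
have [xt [ct [hct [het0 [hete [hxt [hreg hst]]]]]]] :=
  @exists_normal_small_adjoint n l C g J x r eps C_closed hrpos
    ltac:(move=> y hy; apply: g_diff; have := vnorm_sub_triangle y x xbar; lra)
    hrS ltac:(move=> eta /heA [c [hc hc2]]; by exists c).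
exists (xt, ct) => /=.
have t1 := vnorm_sub_triangle x xt xbar; have t2 := vnorm_sub_triangle xt x xbar.
rewrite (vnorm_subC x xt) in t1.
split => //; split => //; split; first lra.
split.
  have -> : delta / 2 / K = 2 * (delta / 4 / K) by field; lra.
  lra.
split.
  apply: Rle_trans hete _; apply: (Rmult_le_reg_l K); first lra.
  have -> : K * (2 / K * vnorm (vsub xt xbar)) = 2 * vnorm (vsub xt xbar) by field; lra.
  lra.
split => //; apply: Rle_trans hst _.
have -> : 4 * eps / r = 4 * (K * eps) / (K * r) by field; lra.
have -> : 4 / K = 4 * r / (K * r) by field; lra.
apply: Rmult_le_compat_r; first by left; apply: Rinv_0_lt_compat; nra.
lra.
Qed.

Lemma not_subregular_limiting_pair (H : 'I_l -> mat n n) :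
  (forall y, vnorm (vsub y xbar) < delta -> forall i, cont_at (fun z => J z i) y) ->
  (forall i, fdiff (fun z => J z i) xbar (H i)) ->
  exists u lam, u <> vzero /\ tangent_cone C (g xbar) (mapp (J xbar) u) /\
    dir_normal C (g xbar) (mapp (J xbar) u) lam /\ mtapp (J xbar) lam = vzero /\
    Rbar_le (lower_curv C lam (g xbar) (mapp (J xbar) u))
            (Fin_r (/ 2 * quad_form (hess_lag H lam) u)) /\
    lam <> vzero.
Proof.
move=> J_cont J_diff.
have [f hf] := choice_nat not_subregular_witness.
have [phi1 [u [hp1 hcv1]]] := @Bolzano_Weierstrass_vec n
  (fun k => normalize (vsub (f k).1 xbar)) 1
  (fun k => Req_le _ _ (vnorm_normalize (hf k).2.2.1)).
have [phi2 [lam [hp2 hcv2]]] := @Bolzano_Weierstrass_vec l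
  (fun j => normalize (vsub (g (f (phi1 j)).1) (f (phi1 j)).2)) 1
  (fun j => Req_le _ _ (vnorm_normalize (hf (phi1 j)).2.1)).
pose psi j := phi1 (phi2 j).
have hpsi : strictly_increasing psi by exact: strictly_increasing_comp.
have hsub c j : 0 <= c -> c / (INR (psi j) + 1) <= c / (INR j + 1).
  move=> hc; apply: Rmult_le_compat_l => //.
  exact: inv_INR_succ_le (strictly_increasing_ge hpsi j).
exists u, lam; apply: (limiting_pair hdelta g_diff J_cont J_diff
  (xs := fun j => (f (psi j)).1) (cs := fun j => (f (psi j)).2)).
- by move=> k; exact: (hf _).1.
- by move=> k; exact: (hf _).2.2.1.
- apply: (Un_cv_le_inv_INR (c := delta / 2)) => j; have [_ [_ [h0 [h1 _]]]] := hf (psi j).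
  by split; [lra | apply: Rle_trans h1 (hsub _ _ _); lra].
- by move=> k; exact: (hf _).2.1.
- apply: (Un_cv_le_inv_INR (c := 2)) => j; have [_ [he [ht [_ [h2 _]]]]] := hf (psi j).
  split; first by left; apply: Rdiv_lt_0_compat.
  apply: (Rle_trans _ _ _ _ (hsub 2 j ltac:(lra))).
  apply: (Rmult_le_reg_r (vnorm (vsub (f (psi j)).1 xbar))) => //.
  by rewrite /Rdiv Rmult_assoc Rinv_l; [rewrite Rmult_1_r | lra].
- by move=> k; exact: (hf _).2.2.2.2.2.1.
- apply: (Un_cv_le_inv_INR (c := 4)) => j; have [_ [_ [_ [_ [_ [_ h]]]]]] := hf (psi j).
  by split; [apply: vnorm_ge0 | apply: Rle_trans h (hsub _ _ _); lra].
- exact: cv_vec_subseq hp2 hcv1.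
- exact: hcv2.
Qed.

End NotSubregular.

Theorem corollary4p6 (n l : nat) (C : vec l -> Prop) (g : vec n -> vec l)
    (xbar : vec n) (J : vec n -> mat l n) (H : 'I_l -> mat n n) (delta : R) :
  is_closed C ->
  C (g xbar) ->
  0 < delta ->
  (forall y, vnorm (vsub y xbar) < delta -> fdiff g y (J y)) ->
  (forall y, vnorm (vsub y xbar) < delta -> forall i, cont_at (fun z => J z i) y) ->
  (forall i, fdiff (fun z => J z i) xbar (H i)) ->
  (forall (u : vec n) (lam : vec l),
      u <> vzero ->
      tangent_cone C (g xbar) (mapp (J xbar) u) ->
      dir_normal C (g xbar) (mapp (J xbar) u) lam ->
      mtapp (J xbar) lam = vzero ->
      Rbar_le (lower_curv C lam (g xbar) (mapp (J xbar) u))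
              (Fin_r (Rinv 2 * dot (mapp (hess_lag H lam) u) u)) ->
      lam = vzero) ->
  metric_subregular g C xbar.
Proof.
move=> C_closed gxbar_in hdelta g_diff J_cont J_diff no_critical_pair.
apply: NNPP => not_subregular.
have [u [lam [hu [htan [hdir [hadj [hcurv hlam]]]]]]] :=
  not_subregular_limiting_pair C_closed gxbar_in hdelta g_diff not_subregular J_cont J_diff.
exact/hlam/(no_critical_pair u lam hu htan hdir hadj hcurv).
Qed.
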